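(* Let $A=(a_1\ a_2\ a_3\ a_4)$ be a matrix of positive integers that admits a gluing of the first kind in the order $(a_1,a_2,a_3,a_4)$ (type $(((a_1\circ a_2)\circ a_3)\circ a_4)$). Let $M$ be a minimal Markov basis of $A$ consisting of $b=(b_1,-b_2,0,0)$, $c=(c_1,c_2,-c_3,0)$, $d=(d_1,d_2,d_3,-d_4)$, where $b_1,b_2,c_3,d_4>0$ and $c_1,c_2,d_1,d_2,d_3\ge0$ are integers, and assume $b_1>b_2$. Then $M$ is distance reducing if and only if all of the following hold: (a) $c_1<c_2+c_3$; (b) ($c_1=0$ and $c_3<c_2$) or $d_1+d_3<d_2+d_4$; (c) $c_1+c_2<c_3$ or $d_1+d_2<d_3+d_4$.
   Context: $A$ admits a gluing of the first kind in the order $(a_1,\dots,a_4)$ if for each $k\in\{1,2,3\}$ there exists $x\in\mathbb N\{a_1,\dots,a_k\}\cap a_{k+1}\mathbb N$ with $x\mathbb Z=\mathbb Z\{a_1,\dots,a_k\}\cap a_{k+1}\mathbb Z$. For $z\in\mathbb Z^n$, $z^\pm\in\mathbb N^n$ are the unique vectors with disjoint supports and $z=z^+-z^-$; $\|\cdot\|$ is the $1$-norm. A Markov basis is a set $B\subseteq\ker(A)$ whose binomials $x^{u^+}-x^{u^-}$ generate the toric ideal $I_A$; minimal means no proper subset is one. For nonzero $z\in\ker(A)$, $u$ reduces the distance of $z$ if there exist $(p,q)\in\{(z^+,z^-),(z^-,z^+)\}$ and $\varepsilon\in\{\pm1\}$ with $p+\varepsilon u\in\mathbb N^n$ and $\|p+\varepsilon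 u-q\|<\|z\|$; $B$ is distance reducing if every nonzero $z\in\ker(A)$ has its distance reduced by some element of $B$. *)

From HB Require Import structures.
From mathcomp Require Import all_boot all_order all_algebra.
From mathcomp Require Import mpoly.
Set Implicit Arguments. Unset Strict Implicit. Unset Printing Implicit Defensive.
Import Order.TTheory GRing.Theory Num.Theory.
Local Open Scope ring_scope.

(* Vectors in Z^n are finite functions 'I_n -> int.  The matrix A = (a_1 .. a_n)
   is a function a : 'I_n -> int (0-indexed: a_i of the paper is a (i-1)). *)
Notation zvec n := {ffun 'I_n -> int}.

Definition inker n (a : 'I_n -> int) (z : zvec n) : Prop :=
  \sum_(i < n) a i * z i = 0.

Definition zpos n (z : zvec n) : zvec n := [ffun i => Num.max (z i) 0].
Definition zneg n (z : zvec n) : zvec n := [ffun i => Num.max (- z i) 0].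

Definition norm1 n (z : zvec n) : int := \sum_(i < n) `|z i|.

Definition nonneg n (z : zvec n) : Prop := forall i, 0 <= z i.

Definition xmon (K : fieldType) n (u : zvec n) : {mpoly K[n]} :=
  @mpolyX n K [multinom absz (u i) | i < n].

Definition binom (K : fieldType) n (u : zvec n) : {mpoly K[n]} :=
  @xmon K n (zpos u) - @xmon K n (zneg u).

Definition toric_ideal (K : fieldType) n (a : 'I_n -> int) (p : {mpoly K[n]}) : Prop :=
  mmap (fun c : K => c%:P) (fun i => 'X^(absz (a i))) p = 0.

Definition in_binom_ideal (K : fieldType) n (B : zvec n -> Prop) (p : {mpoly K[n]}) : Prop :=
  exists s : seq ({mpoly K[n]} * zvec n),
    (forall x, x \in s -> B x.2) /\ p = \sum_(x <- s) x.1 * @binom K n x.2.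

Definition markov_basis (K : fieldType) n (a : 'I_n -> int) (B : zvec n -> Prop) : Prop :=
  (forall u, B u -> inker a u) /\
  (forall p, toric_ideal a p <-> @in_binom_ideal K n B p).

Definition minimal_markov_basis (K : fieldType) n (a : 'I_n -> int) (B : zvec n -> Prop) : Prop :=
  @markov_basis K n a B /\
  forall B' : zvec n -> Prop, (forall u, B' u -> B u) -> (exists u, B u /\ ~ B' u) ->
    ~ @markov_basis K n a B'.

Definition reduces_distance n (u z : zvec n) : Prop :=
  exists (p q : zvec n) (eps : int),
    ((p = zpos z /\ q = zneg z) \/ (p = zneg z /\ q = zpos z)) /\
    (eps = 1 \/ eps = -1) /\
    nonneg [ffun i => p i + eps * u i] /\
    norm1 [ffun i => p i + eps * u i - q i] < norm1 z.

Definition distance_reducing n (a : 'I_n -> int) (B : zvec n -> Prop) : Prop :=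
  forall z : zvec n, inker a z -> (exists i, z i != 0) -> exists2 u, B u & reduces_distance u z.

Definition in_NS n (a : 'I_n -> int) (k : nat) (x : int) : Prop :=
  exists c : 'I_n -> nat, x = \sum_(i < n | (i < k)%N) (c i)%:Z * a i.
Definition in_ZL n (a : 'I_n -> int) (k : nat) (x : int) : Prop :=
  exists c : 'I_n -> int, x = \sum_(i < n | (i < k)%N) c i * a i.

Definition gluing_first_kind n (a : 'I_n -> int) : Prop :=
  forall (k : nat) (Hk : (k < n)%N), (1 <= k)%N ->
    let ak1 := a (Ordinal Hk) in
    exists x : int,
      in_NS a k x /\ (exists m : nat, x = m%:Z * ak1) /\
      (forall y : int, (exists m : int, y = m * x) <->
                       (in_ZL a k y /\ exists m : int, y = m * ak1)).

Definition vec4 (x0 x1 x2 x3 : int) : zvec 4 :=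
  [ffun i : 'I_4 => nth 0 [:: x0; x1; x2; x3] i].

From HB Require Import structures.
From mathcomp Require Import all_boot all_order all_algebra.
From mathcomp Require Import mpoly.
From mathcomp Require Import zify ring.
From Stdlib Require Import ClassicalEpsilon.
Import Order.TTheory GRing.Theory Num.Theory.
Local Open Scope ring_scope.
Set Implicit Arguments. Unset Strict Implicit. Unset Printing Implicit Defensive.

(* Since M generates I_A, every z in ker A is an integer combination x b + y c + w d.
   Replacing z by -z we may assume w > 0, or w = 0 < y.  If |z_1| >= b_1 then b
   reduces z, because b_1 > b_2; otherwise the signs of x, y, w fix enough of the sign
   pattern of z for (a), (b) or (c) to make c or d reduce it.  Conversely, if (c), then
   (b), then (a) fails, the kernel vector a_4 e_3 - a_3 e_4, a_4 e_2 - a_2 e_4, resp.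
   a_3 e_2 - a_2 e_3 is reduced by no element of M. *)

Section LinearExtension.
Variables (R : ringType) (n : nat) (F : 'X_{1..n} -> R).

Definition mlin (p : {mpoly R[n]}) : R := \sum_(m <- msupp p) p@_m * F m.

Lemma mlinEw p r : uniq r -> {subset msupp p <= r} ->
  mlin p = \sum_(m <- r) p@_m * F m.
Proof.
move=> ur sub; rewrite /mlin [RHS](bigID (mem (msupp p))) /=.
rewrite [X in _ + X]big1 ?addr0; last by move=> m /memN_msupp_eq0 ->; rewrite mul0r.
rewrite -[RHS]big_filter; apply: perm_big; apply: uniq_perm; rewrite ?filter_uniq ?msupp_uniq //.
by move=> m; rewrite mem_filter andb_idr //; apply: sub.
Qed.

Lemma mlin_is_additive : additive mlin.
Proof.
move=> p q; pose r := undup (msupp p ++ msupp q).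
have sub_r s : {subset msupp s <= msupp p ++ msupp q} -> {subset msupp s <= r}.
  by move=> sub m /sub; rewrite mem_undup.
have sub_p : {subset msupp p <= r} by apply: sub_r => m mp; rewrite mem_cat mp.
have sub_q : {subset msupp q <= r} by apply: sub_r => m mq; rewrite mem_cat mq orbT.
have sub_pq : {subset msupp (p - q) <= r}.
  by apply: sub_r => m /msuppD_le; rewrite !mem_cat (perm_mem (msuppN q)).
rewrite !(@mlinEw _ r) ?undup_uniq // -sumrB.
by apply: eq_bigr => m _; rewrite mcoeffB mulrBl.
Qed.

HB.instance Definition _ :=
  GRing.isAdditive.Build {mpoly R[n]} R mlin mlin_is_additive.

Lemma mlinX m : mlin 'X_[m] = F m.
Proof. by rewrite /mlin msuppX big_seq1 mcoeffX eqxx mul1r. Qed.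

Lemma mlinMX p m0 : mlin (p * 'X_[m0]) = \sum_(m <- msupp p) p@_m * F (m0 + m)%MM.
Proof.
rewrite (@mlinEw _ [seq (m0 + m)%MM | m <- msupp p]).
- by rewrite big_map; apply: eq_bigr => m _; rewrite mcoeffMX.
- by rewrite map_inj_uniq ?msupp_uniq // => m1 m2 /=; rewrite ![(m0 + _)%MM]addmC; apply: addIm.
- by move=> m; rewrite (perm_mem (msuppMX p m0)).
Qed.

End LinearExtension.

Lemma mmap1_Xpow (R : ringType) n (e : 'I_n -> nat) (m : 'X_{1..n}) :
  mmap1 (fun i => ('X^(e i) : {poly R})) m = 'X^(\sum_(i < n) e i * m i).
Proof. by rewrite /mmap1; under eq_bigr do rewrite -exprM; rewrite prodrXr. Qed.

Lemma toric_ideal_binom (K : fieldType) n (a : 'I_n -> int) (z : zvec n) :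
  (forall i, 0 <= a i) -> inker a z -> toric_ideal a (binom K z).
Proof.
move=> a_ge0 zker; rewrite /toric_ideal /binom /xmon mmapB !mmapX !mmap1_Xpow.
apply/eqP; rewrite subr_eq0; apply/eqP; congr ('X^ _).
apply/eqP; rewrite -(eqr_nat int) !natr_sum -subr_eq0 -sumrB -{2}zker.
apply/eqP/eq_bigr => i _; rewrite !mnmE !natrM !ffunE.
by have := a_ge0 i; move: (a i) (z i) => ai zi; rewrite !pmulrn; nia.
Qed.

Section ExponentVectors.
Variable n : nat.

Definition mexp (u : zvec n) : 'X_{1..n} := [multinom absz (u i) | i < n].
Definition mvec (m : 'X_{1..n}) : zvec n := [ffun i => (m i)%:Z].

Lemma mvecD m1 m2 : mvec (m1 + m2)%MM = mvec m1 + mvec m2.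
Proof. by apply/ffunP => i; rewrite !ffunE mnmDE PoszD. Qed.

Lemma mvec_mexp_zpos (u : zvec n) : mvec (mexp (zpos u)) = zpos u.
Proof. by apply/ffunP => i; rewrite !ffunE mnmE ffunE; move: (u i) => x; lia. Qed.

Lemma mvec_mexp_zneg (u : zvec n) : mvec (mexp (zneg u)) = zneg u.
Proof. by apply/ffunP => i; rewrite !ffunE mnmE ffunE; move: (u i) => x; lia. Qed.

Lemma zpos_subr_zneg (u : zvec n) : zpos u - zneg u = u.
Proof. by apply/ffunP => i; rewrite !ffunE; move: (u i) => x; lia. Qed.

End ExponentVectors.

(* The functional sending x^m to 1 if m - z^+ lies in L and to 0 otherwise is
   constant on L-cosets, so it kills every x^m (x^(u+) - x^(u-)) with u in L, hence
   the whole toric ideal; on x^(z+) - x^(z-) it takes the value 1 - [-z in L]. *)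
Lemma markov_basis_lattice (K : fieldType) n (a : 'I_n -> int) (B L : zvec n -> Prop) :
  (forall i, 0 <= a i) -> markov_basis K a B ->
  (forall u, B u -> L u) -> L 0 -> (forall u v, L u -> L v -> L (u - v)) ->
  forall z, inker a z -> L z.
Proof.
move=> a_ge0 [_ genB] BL L0 LB z zker.
have LN u : L u -> L (- u) by rewrite -sub0r; apply: LB.
have L_coset u v : L (u - v) -> L u -> L v.
  by move=> Luv Lu; rewrite -(subrKC u v) -opprB; apply: LB.
have [inL inLP] : {inL : zvec n -> bool & forall v, reflect (L v) (inL v)}.
  exists (fun v => if excluded_middle_informative (L v) then true else false) => v.
  by case: excluded_middle_informative => Lv; constructor.
pose F (m : 'X_{1..n}) : K := (inL (mvec m - zpos z))%:R.
have F_coset m m1 m2 : L (mvec m1 - mvec m2) -> F (m1 + m)%MM = F (m2 + m)%MM.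
  move=> L12; rewrite /F !mvecD; congr (nat_of_bool _)%:R.
  set u1 := _ - zpos z; set u2 := _ - zpos z.
  have E : u1 - u2 = mvec m1 - mvec m2.
    by apply/ffunP => i; rewrite !ffunE; lia.
  apply/inLP/inLP => L'; apply: L_coset L'; first by rewrite E.
  by rewrite -opprB E; apply: LN.
have : mlin F (binom K z) = 0.
  have [s [sB ->]] := (genB _).1 (toric_ideal_binom K a_ge0 zker).
  rewrite raddf_sum big1_seq // => -[q u] /= /sB /= Bu.
  rewrite /binom /xmon mulrBr raddfB /= !mlinMX -sumrB big1 // => m _.
  rewrite (F_coset m _ (mexp (zneg u))) ?subrr //.
  by rewrite mvec_mexp_zpos mvec_mexp_zneg zpos_subr_zneg; apply: BL.
move/eqP; rewrite /binom /xmon raddfB /= !mlinX subr_eq0 /F.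
rewrite mvec_mexp_zpos mvec_mexp_zneg subrr -[zneg z - zpos z]opprB zpos_subr_zneg.
rewrite (introT (inLP _) L0); case: inLP => [/LN|_]; first by rewrite opprK.
by rewrite /= mulr1n mulr0n oner_eq0.
Qed.

Definition reducible_by n (B : zvec n -> Prop) (z : zvec n) : Prop :=
  exists2 u, B u & reduces_distance u z.

Lemma norm1N n (z : zvec n) : norm1 (- z) = norm1 z.
Proof. by apply: eq_bigr => i _; rewrite ffunE normrN. Qed.

Lemma zposN n (z : zvec n) : zpos (- z) = zneg z.
Proof. by apply/ffunP => i; rewrite !ffunE. Qed.

Lemma znegN n (z : zvec n) : zneg (- z) = zpos z.
Proof. by apply/ffunP => i; rewrite !ffunE opprK. Qed.

Lemma reduces_distanceN n (u z : zvec n) :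
  reduces_distance u z -> reduces_distance u (- z).
Proof.
case=> p [q [e [pq [e_unit [p_ge0 lt_pq]]]]]; exists p, q, e.
by rewrite zposN znegN norm1N; split=> //; case: pq; [right|left].
Qed.

Lemma reducible_byN n (B : zvec n -> Prop) z : reducible_by B z -> reducible_by B (- z).
Proof. by case=> u Bu red; exists u => //; apply: reduces_distanceN. Qed.

Lemma reduces_distanceP n (u z : zvec n) :
  reduces_distance u z <-> exists2 e : int, e = 1 \/ e = -1 &
    nonneg [ffun i => zpos z i + e * u i] /\ norm1 [ffun i => z i + e * u i] < norm1 z \/
    nonneg [ffun i => zneg z i + e * u i] /\ norm1 [ffun i => z i - e * u i] < norm1 z.
Proof.
have norm_pos e : norm1 [ffun i => zpos z i + e * u i - zneg z i] =
                  norm1 [ffun i => z i + e * u i].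
  by apply: eq_bigr => i _; rewrite !ffunE; congr `|_|; move: (z i) => x; lia.
have norm_neg e : norm1 [ffun i => zneg z i + e * u i - zpos z i] =
                  norm1 [ffun i => z i - e * u i].
  by apply: eq_bigr => i _; rewrite !ffunE -normrN; congr `|_|; move: (z i) => x; lia.
split.
- case=> p [q [e [[[-> ->]|[-> ->]] [e_unit [p_ge0 lt_pq]]]]]; exists e => //.
  + by left; rewrite -norm_pos.
  + by right; rewrite -norm_neg.
- case=> e e_unit [[p_ge0 lt_pq]|[p_ge0 lt_pq]].
  + by exists (zpos z), (zneg z), e; rewrite norm_pos; do !split => //; left.
  + by exists (zneg z), (zpos z), e; rewrite norm_neg; do !split => //; right.
Qed.

Definition i0 : 'I_4 := @Ordinal 4 0 isT.
Definition i1 : 'I_4 := @Ordinal 4 1 isT.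
Definition i2 : 'I_4 := @Ordinal 4 2 isT.
Definition i3 : 'I_4 := @Ordinal 4 3 isT.

Lemma forall4P (P : 'I_4 -> Prop) : (forall i, P i) <-> [/\ P i0, P i1, P i2 & P i3].
Proof.
split=> [Pi|[P0 P1 P2 P3] [[|[|[|[|k]]]] lt_k4]] //.
- by rewrite (_ : Ordinal _ = i0) //; apply: val_inj.
- by rewrite (_ : Ordinal _ = i1) //; apply: val_inj.
- by rewrite (_ : Ordinal _ = i2) //; apply: val_inj.
- by rewrite (_ : Ordinal _ = i3) //; apply: val_inj.
Qed.

Lemma sum4 (f : 'I_4 -> int) : \sum_(i < 4) f i = f i0 + f i1 + f i2 + f i3.
Proof.
rewrite !big_ord_recl big_ord0 addr0 !addrA.
by congr (f _ + f _ + f _ + f _); apply: val_inj.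
Qed.

Lemma vec4_neq0 x0 x1 x2 x3 :
  (exists i, vec4 x0 x1 x2 x3 i != 0) <-> [|| x0 != 0, x1 != 0, x2 != 0 | x3 != 0].
Proof.
split=> [[i]|].
  apply: contraNT; rewrite !negb_or !negbK => /and4P[/eqP-> /eqP-> /eqP-> /eqP->].
  by move: i; apply/forall4P; rewrite !ffunE.
by case/or4P => nz; [exists i0|exists i1|exists i2|exists i3]; rewrite ffunE.
Qed.

Lemma reduces_distance_vec4 u0 u1 u2 u3 z0 z1 z2 z3 :
  reduces_distance (vec4 u0 u1 u2 u3) (vec4 z0 z1 z2 z3) <->
  exists2 e : int, e = 1 \/ e = -1 &
    [/\ 0 <= Num.max z0 0 + e * u0, 0 <= Num.max z1 0 + e * u1,
        0 <= Num.max z2 0 + e * u2, 0 <= Num.max z3 0 + e * u3 &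
        `|z0 + e * u0| + `|z1 + e * u1| + `|z2 + e * u2| + `|z3 + e * u3|
          < `|z0| + `|z1| + `|z2| + `|z3|] \/
    [/\ 0 <= Num.max (- z0) 0 + e * u0, 0 <= Num.max (- z1) 0 + e * u1,
        0 <= Num.max (- z2) 0 + e * u2, 0 <= Num.max (- z3) 0 + e * u3 &
        `|z0 - e * u0| + `|z1 - e * u1| + `|z2 - e * u2| + `|z3 - e * u3|
          < `|z0| + `|z1| + `|z2| + `|z3|].
Proof.
rewrite reduces_distanceP /nonneg /norm1.
split=> -[e e_unit H]; exists e => //; move: H; rewrite !sum4 !ffunE /=.
- case=> -[/forall4P[p0 p1 p2 p3] lt]; move: p0 p1 p2 p3; rewrite !ffunE /=;
    by [left | right].
- by case=> -[p0 p1 p2 p3 lt]; [left|right]; split=> //; apply/forall4P; rewrite !ffunE.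
Qed.

Section ThreeElementBasis.
Variables b1 b2 c1 c2 c3 d1 d2 d3 d4 : nat.

Definition bvec : zvec 4 := vec4 b1%:Z (- b2%:Z) 0 0.
Definition cvec : zvec 4 := vec4 c1%:Z c2%:Z (- c3%:Z) 0.
Definition dvec : zvec 4 := vec4 d1%:Z d2%:Z d3%:Z (- d4%:Z).

Definition basis3 (v : zvec 4) : Prop := v = bvec \/ v = cvec \/ v = dvec.

Definition lincomb (x y w : int) : zvec 4 := bvec *~ x + cvec *~ y + dvec *~ w.

Lemma lincombE x y w :
  lincomb x y w = vec4 (x * b1 + y * c1 + w * d1) (- (x * b2) + y * c2 + w * d2)
                       (- (y * c3) + w * d3) (- (w * d4)).
Proof.
apply/ffunP; apply/forall4P.
by rewrite !ffunE !ffunMzE !ffunE /= !mulrzz; split; ring.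
Qed.

Lemma lincombN x y w : lincomb (- x) (- y) (- w) = - lincomb x y w.
Proof. by rewrite /lincomb !mulrNz !opprD. Qed.

Lemma lincombB x y w x' y' w' :
  lincomb x y w - lincomb x' y' w' = lincomb (x - x') (y - y') (w - w').
Proof. by rewrite /lincomb; apply/ffunP => i; rewrite !ffunE !ffunMzE !mulrzz; ring. Qed.

Hypotheses (b2_lt_b1 : (b2 < b1)%N) (c3_gt0 : (0 < c3)%N) (d4_gt0 : (0 < d4)%N).

Ltac reduce_by u e :=
  exists u; [rewrite /basis3; tauto | apply/reduces_distance_vec4; exists e;
    [tauto | first [left; split; lia | right; split; lia]]].

Section Sufficiency.
Hypotheses (cond_a : (c1 < c2 + c3)%N)
  (cond_b : (c1 = 0%N /\ (c3 < c2)%N) \/ (d1 + d3 < d2 + d4)%N)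
  (cond_c : (c1 + c2 < c3)%N \/ (d1 + d2 < d3 + d4)%N).

Section Regions.
Variables z0 z1 z2 z3 : int.

Lemma reducible_large_z0 : b1%:Z <= `|z0| -> reducible_by basis3 (vec4 z0 z1 z2 z3).
Proof. by move=> b1_le_z0; case: (lerP 0 z0) => z0_sign; reduce_by bvec (-1 : int). Qed.

Lemma reducible_sub_cvec :
  c2%:Z <= z1 -> z2 <= - c3%:Z -> reducible_by basis3 (vec4 z0 z1 z2 z3).
Proof. by move=> z1_ge z2_le; reduce_by cvec (1 : int). Qed.

Lemma reducible_large_z2 :
  c3%:Z + d3%:Z <= z2 -> z3 <= - d4%:Z -> reducible_by basis3 (vec4 z0 z1 z2 z3).
Proof.
by move=> z2_ge z3_le; case: cond_c => c_cond; [reduce_by cvec (1 : int) | reduce_by dvec (1 : int)].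
Qed.

Lemma reducible_sub_dvec :
  d2%:Z <= z1 -> d3%:Z <= z2 -> z3 <= - d4%:Z -> reducible_by basis3 (vec4 z0 z1 z2 z3).
Proof. by move=> z1_ge z2_ge z3_le; reduce_by dvec (1 : int). Qed.

Lemma reducible_large_z1 :
  c2%:Z + d2%:Z <= z1 -> z3 <= - d4%:Z -> reducible_by basis3 (vec4 z0 z1 z2 z3).
Proof.
by move=> z1_ge z3_le; case: cond_b => b_cond; [reduce_by cvec (-1 : int) | reduce_by dvec (1 : int)].
Qed.

End Regions.

Lemma reducible_vec4_wlog (x y w z0 z1 z2 z3 : int) :
  z0 = x * b1 + y * c1 + w * d1 -> z1 = - (x * b2) + y * c2 + w * d2 ->
  z2 = - (y * c3) + w * d3 -> z3 = - (w * d4) ->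
  0 <= w -> (w = 0 -> 0 <= y) -> [|| z0 != 0, z1 != 0, z2 != 0 | z3 != 0] ->
  reducible_by basis3 (vec4 z0 z1 z2 z3).
Proof.
move=> E0 E1 E2 E3 w_ge0 w0_y_ge0 nz.
have [b1_le_z0|z0_lt_b1] := lerP b1%:Z `|z0|; first exact: reducible_large_z0.
have [w0|w_ge1] : w = 0 \/ 1 <= w by lia.
  have {w0_y_ge0} y_ge0 := w0_y_ge0 w0; subst w.
  have y_ge1 : 1 <= y.
    have [y0|//] : y = 0 \/ 1 <= y by lia.
    have x0 : x = 0 by subst; nia.
    by move: nz; subst; rewrite !mul0r !oppr0 !addr0 eqxx.
  have x_le0 : x <= 0 by nia.
  by apply: reducible_sub_cvec; nia.
have z3_le : z3 <= - d4%:Z by nia.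
have [y_lt0|y_ge0] := ltrP y 0.
  by apply: reducible_large_z2 => //; nia.
have x_le0 : x <= 0 by nia.
have [y0|y_ge1] : y = 0 \/ 1 <= y by lia.
  by apply: reducible_sub_dvec => //; nia.
by apply: reducible_large_z1 => //; nia.
Qed.

Lemma reducible_lincomb x y w :
  (exists i, lincomb x y w i != 0) -> reducible_by basis3 (lincomb x y w).
Proof.
wlog [w_ge0 y_ge0] : x y w / 0 <= w /\ (w = 0 -> 0 <= y).
  move=> wlog_red nz; have [sign|sign] : (0 <= w /\ (w = 0 -> 0 <= y)) \/
                                 (0 <= - w /\ (- w = 0 -> 0 <= - y)) by lia.
    exact: wlog_red.
  rewrite -[lincomb x y w]opprK -lincombN; apply/reducible_byN/wlog_red => //.
  by case: nz => i nz; exists i; rewrite lincombN ffunE oppr_eq0.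
case=> i nz; rewrite lincombE; apply: reducible_vec4_wlog => //.
by apply/vec4_neq0; exists i; rewrite -lincombE.
Qed.

End Sufficiency.

Section Necessity.
Variables P Q : int.
Hypotheses (P_ge0 : 0 <= P) (Q_ge0 : 0 <= Q).

Ltac irreducible :=
  case=> u [->|[->|->]] /reduces_distance_vec4
    [e [->|->] [[? ? ? ? ?]|[? ? ? ? ?]]]; lia.

Lemma irreducible_z1z2 :
  (c2 + c3 <= c1)%N -> (c1 = 0%N /\ (c3 < c2)%N) \/ (d1 + d3 < d2 + d4)%N ->
  (c1 + c2 < c3)%N \/ (d1 + d2 < d3 + d4)%N ->
  ~ reducible_by basis3 (vec4 0 P (- Q) 0).
Proof. by move=> not_a cond_b cond_c; irreducible. Qed.

Lemma irreducible_z1z3 :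
  ~ ((c1 = 0%N /\ (c3 < c2)%N) \/ (d1 + d3 < d2 + d4)%N) ->
  ~ reducible_by basis3 (vec4 0 P 0 (- Q)).
Proof. by move=> not_b; irreducible. Qed.

Lemma irreducible_z2z3 :
  ~ ((c1 + c2 < c3)%N \/ (d1 + d2 < d3 + d4)%N) ->
  ~ reducible_by basis3 (vec4 0 0 P (- Q)).
Proof. by move=> not_c; irreducible. Qed.

End Necessity.
End ThreeElementBasis.

Lemma inker_vec4 (a : 'I_4 -> int) z0 z1 z2 z3 :
  inker a (vec4 z0 z1 z2 z3) <-> a i0 * z0 + a i1 * z1 + a i2 * z2 + a i3 * z3 = 0.
Proof. by rewrite /inker sum4 !ffunE. Qed.

Lemma distance_reducing_basis3 b1 b2 c1 c2 c3 d1 d2 d3 d4 (K : fieldType) (a : 'I_4 -> int) :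
  (b2 < b1)%N -> (0 < c3)%N -> (0 < d4)%N -> (c1 < c2 + c3)%N ->
  (c1 = 0%N /\ (c3 < c2)%N) \/ (d1 + d3 < d2 + d4)%N ->
  (c1 + c2 < c3)%N \/ (d1 + d2 < d3 + d4)%N ->
  (forall i, 0 <= a i) -> markov_basis K a (basis3 b1 b2 c1 c2 c3 d1 d2 d3 d4) ->
  distance_reducing a (basis3 b1 b2 c1 c2 c3 d1 d2 d3 d4).
Proof.
move=> b2_lt_b1 c3_gt0 d4_gt0 cond_a cond_b cond_c a_ge0 mb z zker.
pose span v := exists x y w, v = lincomb b1 b2 c1 c2 c3 d1 d2 d3 d4 x y w.
have [x [y [w ->]]] : span z.
  apply: (markov_basis_lattice (L := span) a_ge0 mb) zker.
  - move=> u [->|[->|->]]; [exists 1, 0, 0 | exists 0, 1, 0 | exists 0, 0, 1];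
      by rewrite /lincomb !mulr1z !mulr0z ?addr0 ?add0r.
  - by exists 0, 0, 0; rewrite /lincomb !mulr0z !addr0.
  - move=> _ _ [x [y [w ->]]] [x' [y' [w' ->]]].
    by exists (x - x'), (y - y'), (w - w'); rewrite lincombB.
exact: reducible_lincomb.
Qed.

Lemma basis3_conditions b1 b2 c1 c2 c3 d1 d2 d3 d4 (a : 'I_4 -> int) :
  (b2 < b1)%N -> (0 < c3)%N -> (0 < d4)%N -> (forall i, 0 < a i) ->
  distance_reducing a (basis3 b1 b2 c1 c2 c3 d1 d2 d3 d4) ->
  [/\ (c1 < c2 + c3)%N,
      (c1 = 0%N /\ (c3 < c2)%N) \/ (d1 + d3 < d2 + d4)%N
    & (c1 + c2 < c3)%N \/ (d1 + d2 < d3 + d4)%N].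
Proof.
move=> b2_lt_b1 c3_gt0 d4_gt0 a_gt0 dr.
have a_ge0 i : 0 <= a i by apply: ltW.
have a_neq0 i : - a i != 0 by rewrite oppr_eq0 gt_eqF.
have cond_c : (c1 + c2 < c3)%N \/ (d1 + d2 < d3 + d4)%N.
  have [//|not_c] : ((c1 + c2 < c3)%N \/ (d1 + d2 < d3 + d4)%N) \/
                    ~ ((c1 + c2 < c3)%N \/ (d1 + d2 < d3 + d4)%N) by lia.
  case: (irreducible_z2z3 b2_lt_b1 c3_gt0 d4_gt0 (a_ge0 i3) (a_ge0 i2) not_c).
  by apply: dr; [apply/inker_vec4; ring | exists i3; rewrite ffunE /=].
have cond_b : (c1 = 0%N /\ (c3 < c2)%N) \/ (d1 + d3 < d2 + d4)%N.
  have [//|not_b] : ((c1 = 0%N /\ (c3 < c2)%N) \/ (d1 + d3 < d2 + d4)%N) \/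
                    ~ ((c1 = 0%N /\ (c3 < c2)%N) \/ (d1 + d3 < d2 + d4)%N) by lia.
  case: (irreducible_z1z3 b2_lt_b1 c3_gt0 d4_gt0 (a_ge0 i3) (a_ge0 i1) not_b).
  by apply: dr; [apply/inker_vec4; ring | exists i3; rewrite ffunE /=].
split=> //; rewrite ltnNge; apply/negP => not_a.
case: (irreducible_z1z2 b2_lt_b1 c3_gt0 d4_gt0 (a_ge0 i2) (a_ge0 i1) not_a cond_b cond_c).
by apply: dr; [apply/inker_vec4; ring | exists i2; rewrite ffunE /=].
Qed.

Theorem corollary6p2 (K : fieldType) (a : 'I_4 -> int)
  (b1 b2 c1 c2 c3 d1 d2 d3 d4 : nat) :
  (forall i, 0 < a i) ->
  gluing_first_kind a ->
  (0 < b1)%N -> (0 < b2)%N -> (0 < c3)%N -> (0 < d4)%N ->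
  @minimal_markov_basis K 4 a
    (fun v => v = vec4 b1%:Z (- b2%:Z) 0 0 \/
              v = vec4 c1%:Z c2%:Z (- c3%:Z) 0 \/
              v = vec4 d1%:Z d2%:Z d3%:Z (- d4%:Z)) ->
  (b2 < b1)%N ->
  (distance_reducing a
    (fun v => v = vec4 b1%:Z (- b2%:Z) 0 0 \/
              v = vec4 c1%:Z c2%:Z (- c3%:Z) 0 \/
              v = vec4 d1%:Z d2%:Z d3%:Z (- d4%:Z))
   <->
   [/\ (c1 < c2 + c3)%N,
       ((c1 = 0%N /\ (c3 < c2)%N) \/ (d1 + d3 < d2 + d4)%N)
     & ((c1 + c2 < c3)%N \/ (d1 + d2 < d3 + d4)%N)]).
Proof.
move=> a_gt0 _ _ _ c3_gt0 d4_gt0 [mb _] b2_lt_b1.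
split; first exact: basis3_conditions.
case=> cond_a cond_b cond_c.
by apply: distance_reducing_basis3 cond_a cond_b cond_c _ mb => // i; apply: ltW.
Qed.
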